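(* Let $n\ge 4$ and let $S_{n-3,1}$ be the tree on $n$ vertices consisting of a vertex $u$ adjacent to $n-3$ leaves and to one further vertex $w$ of degree $2$ whose other neighbor is a leaf. Then $\rho_{ABC}(S_{n-3,1})>\sqrt{n-3.5}$.
   Context: For a simple connected graph $G$ with vertex set $\{v_1,\dots,v_n\}$ and degrees $d_i$, the ABC matrix is $M(G)=(m_{ij})_{n\times n}$ with $m_{ij}=\sqrt{(d_i+d_j-2)/(d_id_j)}$ if $v_iv_j$ is an edge and $m_{ij}=0$ otherwise. The ABC spectral radius $\rho_{ABC}(G)$ is the largest eigenvalue of $M(G)$. *)

From HB Require Import structures.
From mathcomp Require Import all_boot all_order all_algebra.
From mathcomp Require Import classical_sets reals.
Set Implicit Arguments. Unset Strict Implicit. Unset Printing Implicit Defensive.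
Import Order.TTheory GRing.Theory Num.Theory.
Local Open Scope ring_scope.

(* A graph on vertex set 'I_n is given by a (symmetric, irreflexive) adjacency
   relation adj. *)
Definition deg (n : nat) (adj : rel 'I_n) (i : 'I_n) : nat :=
  #|[set j | adj i j]|.

Definition ABC_matrix (R : realType) (n : nat) (adj : rel 'I_n) : 'M[R]_n :=
  \matrix_(i, j)
    (if adj i j then
       Num.sqrt (((deg adj i)%:R + (deg adj j)%:R - 2) /
                 ((deg adj i)%:R * (deg adj j)%:R))
     else 0).

(* ABC spectral radius: the largest eigenvalue of the ABC matrix
   (the supremum of the finite, nonempty set of real eigenvalues). *)
Definition rho_ABC (R : realType) (n : nat) (adj : rel 'I_n) : R :=
  sup [set l : R | eigenvalue (ABC_matrix R adj) l].

(* The tree S_{n-3,1}: vertex 0 = u, vertex 1 = w, vertex 2 = the leaf adjacent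
   to w, vertices 3..n-1 = the n-3 leaves adjacent to u. *)
Definition S_adj (n : nat) : rel 'I_n := fun i j =>
  let a := val i in let b := val j in
  [|| (a == 0%N) && (b == 1%N), (a == 1%N) && (b == 0%N),
      (a == 1%N) && (b == 2%N), (a == 2%N) && (b == 1%N),
      (a == 0%N) && (3 <= b)%N | (3 <= a)%N && (b == 0%N)].

From HB Require Import structures.
From mathcomp Require Import all_boot all_order all_algebra.
From mathcomp Require Import classical_sets reals.
From mathcomp Require Import zify ring lra.
Set Implicit Arguments. Unset Strict Implicit. Unset Printing Implicit Defensive.
Import Order.TTheory GRing.Theory Num.Theory.
Local Open Scope ring_scope.

(* The n - 3 leaves at the hub u are interchangeable, so the ABC matrix maps
   vectors constant on them to such vectors, acting through a 4 x 4 quotient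
   matrix with entries sqrt(1/2) on the path u - w - v and
   s = sqrt((n-3)/(n-2)) on the hub-leaf edges.  That quotient has the
   eigenvalue sqrt t whenever 2t^2 - (2 + 2c) t + c = 0 with
   c = (n-3)^2/(n-2) >= n - 4; the larger root exceeds c + 1/2 >= n - 7/2,
   and every eigenvalue is at most the largest one. *)

Lemma eigenvalue_le_sum_norm (R : realFieldType) n (A : 'M[R]_n) l :
  eigenvalue A l -> l <= \sum_i \sum_j `|A i j|.
Proof.
case/eigenvalueP => v vA v0.
set B := \sum_i \sum_j `|A i j|.
set S := \sum_i `|v 0 i|.
have S_gt0 : 0 < S.
  rewrite lt_def sumr_ge0 // andbT; apply: contra v0 => /eqP S0.
  apply/eqP/rowP => i; rewrite mxE; apply/normr0_eq0.
  exact: (psumr_eq0P _ S0).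
have row_le j : \sum_i `|A j i| <= B.
  rewrite /B [X in _ <= X](bigD1 j) //= lerDl.
  by apply: sumr_ge0 => k _; exact: sumr_ge0.
have : `|l| * S <= S * B.
  rewrite /S mulr_sumr.
  apply: (@le_trans _ _ (\sum_i \sum_j `|v 0 j| * `|A j i|)).
    apply: ler_sum => i _.
    have -> : `|l| * `|v 0 i| = `|(v *m A) 0 i| by rewrite vA !mxE normrM.
    rewrite mxE; apply: le_trans (ler_norm_sum _ _ _) _.
    by apply: ler_sum => j _; rewrite normrM.
  rewrite exchange_big /= mulr_suml; apply: ler_sum => j _.
  by rewrite -mulr_sumr ler_wpM2l ?row_le.
by rewrite [S * B]mulrC ler_pM2r // => /(le_trans (ler_norm l)).
Qed.

Lemma eigenvalue_le_sup (R : realType) n (A : 'M[R]_n) l :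
  eigenvalue A l -> l <= sup [set x : R | eigenvalue A x].
Proof.
move=> Al; apply: sup_upper_bound => //; split; first by exists l.
by exists (\sum_i \sum_j `|A i j|) => x; apply: eigenvalue_le_sum_norm.
Qed.

Definition abc_weight (R : realType) (d1 d2 : nat) : R :=
  Num.sqrt ((d1%:R + d2%:R - 2) / (d1%:R * d2%:R)).

Lemma ABC_matrixE (R : realType) n (adj : rel 'I_n) i j :
  ABC_matrix R adj i j = if adj i j then abc_weight R (deg adj i) (deg adj j) else 0.
Proof. by rewrite mxE. Qed.

Lemma abc_weightC (R : realType) d1 d2 : abc_weight R d1 d2 = abc_weight R d2 d1.
Proof. by rewrite /abc_weight [d1%:R + _]addrC [d1%:R * _]mulrC. Qed.

Lemma abc_weight_2 (R : realType) d : abc_weight R d.+1 2 = Num.sqrt (1 / 2).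
Proof.
rewrite /abc_weight -addrA subrr addr0; congr Num.sqrt.
by field; rewrite addrC natr1 pnatr_eq0.
Qed.

Lemma abc_weight_1 (R : realType) d :
  abc_weight R d.+1 1 = Num.sqrt (d%:R / d.+1%:R).
Proof.
by rewrite /abc_weight mulr1 -natr1; congr (Num.sqrt (_ / _)); lra.
Qed.

Definition larger_root (R : rcfType) (c : R) : R :=
  (1 + c + Num.sqrt (1 + c ^+ 2)) / 2.

Lemma larger_rootP (R : rcfType) (c : R) (t := larger_root c) :
  2 * t ^+ 2 - (2 + 2 * c) * t + c = 0.
Proof.
rewrite /t /larger_root; set r := Num.sqrt _.
have r2 : r ^+ 2 = 1 + c ^+ 2 by rewrite sqr_sqrtr // addr_ge0 // sqr_ge0.
transitivity ((r ^+ 2 - (1 + c ^+ 2)) / 2); first by field.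
by rewrite r2 subrr mul0r.
Qed.

Lemma larger_root_gt (R : rcfType) (c : R) :
  0 <= c -> c + 1 / 2 < larger_root c.
Proof.
move=> c0; have : c < Num.sqrt (1 + c ^+ 2).
  rewrite -{1}(ger0_norm c0) -sqrtr_sqr ltr_sqrt ?ltrDr //.
  by rewrite ltr_wpDr // sqr_ge0.
rewrite /larger_root; lra.
Qed.

Section StarWithPendantPath.

Variables (R : realType) (m : nat).

Definition S_edge (a b : nat) : bool :=
  [|| (a == 0%N) && (b == 1%N), (a == 1%N) && (b == 0%N),
      (a == 1%N) && (b == 2%N), (a == 2%N) && (b == 1%N),
      (a == 0%N) && (3 <= b)%N | (3 <= a)%N && (b == 0%N)].

Definition S_deg (a : nat) : nat :=
  if a == 0%N then m.+2 else if a == 1%N then 2%N else 1%N.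

Lemma deg_S_adj (i : 'I_m.+4) : deg (@S_adj m.+4) i = S_deg i.
Proof.
have -> : deg (@S_adj m.+4) i = count (S_edge i) (iota 0 m.+4).
  rewrite /deg cardsE cardE /enum_mem size_filter -val_enum_ord count_map enumT.
  exact: eq_count.
have -> : iota 0 m.+4 = [:: 0; 1; 2] ++ iota 3 m.+1 by [].
rewrite count_cat [count _ (iota _ _)](@eq_in_count _ _ (fun=> i == 0%N :> nat)).
  2: by move=> b; rewrite mem_iota /S_edge => /andP[b3 _]; lia.
case: i => [[|[|[|a]]] _] /=; rewrite /S_deg /=.
all: by rewrite ?count_predT ?count_pred0 ?size_iota.
Qed.

Definition S_ABC (a b : nat) : R :=
  if S_edge a b then abc_weight R (S_deg a) (S_deg b) else 0.

Lemma ABC_S_adjE (j k : 'I_m.+4) :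
  ABC_matrix R (@S_adj m.+4) j k = S_ABC j k.
Proof. by rewrite ABC_matrixE !deg_S_adj. Qed.

Let h : R := Num.sqrt (1 / 2).
Let s : R := Num.sqrt (m.+1%:R / m.+2%:R).

Lemma S_ABC_mul_row (f : nat -> R) (k : 'I_m.+4) :
  (forall j, (3 <= j)%N -> f j = f 3%N) ->
  (\row_(j < m.+4) f j *m ABC_matrix R (@S_adj m.+4)) 0 k =
  if k == 0%N :> nat then h * f 1%N + m.+1%:R * s * f 3%N
  else if k == 1%N :> nat then h * (f 0%N + f 2%N)
  else if k == 2%N :> nat then h * f 1%N
  else s * f 0%N.
Proof.
move=> f_leaf; rewrite mxE.
under eq_bigr => j _ do rewrite ABC_S_adjE mxE.
rewrite -(big_mkord xpredT (fun j => f j * S_ABC j k)) big_ltn // big_ltn // big_ltn //.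
have leaf_term j : (3 <= j < m.+4)%N ->
    f j * S_ABC j k = if k == 0%N :> nat then s * f 3%N else 0.
  move=> /andP[j3 _]; rewrite f_leaf //; case: j j3 => [|[|[|j]]] // _.
  case: (nat_of_ord k) => [|b]; rewrite /S_ABC /S_deg /= ?mulr0 //.
  by rewrite abc_weightC abc_weight_1 mulrC.
rewrite (eq_big_nat _ _ leaf_term) sumr_const_nat {leaf_term}.
have -> : (m.+4 - 3 = m.+1)%N by [].
case: k => [i hi] /=; case: i hi => [|[|[|b]]] _; rewrite /S_ABC /S_deg /=.
all: rewrite ?[abc_weight R 2 _]abc_weightC ?abc_weight_2 ?abc_weight_1.
- by rewrite -[_ *+ m.+1]mulr_natr /h /s; ring.
all: by rewrite mul0rn /h /s; ring.
Qed.

Lemma S_ABC_eigenvalue (t : R) (c := m.+1%:R ^+ 2 / m.+2%:R) :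
  0 < t -> 2 * t ^+ 2 - (2 + 2 * c) * t + c = 0 ->
  eigenvalue (ABC_matrix R (@S_adj m.+4)) (Num.sqrt t).
Proof.
move=> t_gt0 root_t; set l := Num.sqrt t.
have l_gt0 : 0 < l by rewrite sqrtr_gt0.
have ll : l ^+ 2 = t by rewrite sqr_sqrtr // ltW.
have hh : h ^+ 2 = 1 / 2 by rewrite sqr_sqrtr //; lra.
have ss : m.+1%:R * s ^+ 2 = c.
  rewrite sqr_sqrtr ?divr_ge0 // /c; field.
  by rewrite -natrD pnatr_eq0.
(* Solve the eigen-equations backwards from x 2 = l: those at the leaves, at 2
   and at 1 then hold identically, and the one at 0 is the quadratic in t. *)
pose x (j : nat) :=
  if j == 0%N then l * (2 * t - 1) else if j == 1%N then 2 * t * h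
  else if j == 2%N then l else s * (2 * t - 1).
apply/eigenvalueP; exists (\row_(j < m.+4) x j); last first.
  apply/eqP => /rowP /(_ (@Ordinal m.+4 2 isT)); rewrite !mxE /x /= => l0.
  by move: l_gt0; rewrite l0 ltxx.
have x_leaf j : (3 <= j)%N -> x j = x 3%N by case: j => [|[|[|j]]].
apply/rowP => k; rewrite S_ABC_mul_row // !mxE.
case: k => [i hi] /=; case: i hi => [|[|[|b]]] _; rewrite /x /=.
- transitivity (2 * t * h ^+ 2 + m.+1%:R * s ^+ 2 * (2 * t - 1)); first by ring.
  transitivity (l ^+ 2 * (2 * t - 1)); last by ring.
  rewrite hh ss ll; nra.
- ring.
- transitivity (2 * t * h ^+ 2); first by ring.
  by rewrite hh -ll; field.
- ring.
Qed.

End StarWithPendantPath.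

Theorem lemma3p3 (R : realType) (n : nat) (hn : (4 <= n)%N) :
  Num.sqrt (n%:R - 7%:R / 2%:R) < rho_ABC R (@S_adj n).
Proof.
case: n hn => [|[|[|[|m]]]] // _.
set c : R := m.+1%:R ^+ 2 / m.+2%:R.
have c_ge_m : m%:R <= c.
  by rewrite /c ler_pdivlMr ?ltr0n // -!natrX -natrM ler_nat; nia.
have root_gt : m%:R + 1 / 2 < larger_root c.
  have := larger_root_gt (le_trans (ler0n _ m) c_ge_m); lra.
have root_gt0 : 0 < larger_root c.
  by apply: le_lt_trans root_gt; have := ler0n R m; lra.
have eig := S_ABC_eigenvalue root_gt0 (larger_rootP c).
apply: (lt_le_trans _ (eigenvalue_le_sup eig)).
by rewrite ltr_sqrt // -[m.+4]addn4 natrD; lra.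
Qed.
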